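(* For every $n\ge 0$, the number of left-walks of length $2n$ equals the number of right-walks of length $2n$.
   Context: All walks are finite sequences of unit steps from $\{N,E,S,W\}=\{(0,1),(1,0),(0,-1),(-1,0)\}$ on $\mathbb{Z}^2$, starting at $(0,0)$. A walk is \emph{eager} if it contains no two consecutive steps $E$ then $S$, and no two consecutive steps $N$ then $W$. A \emph{QP-subloop} of a walk is a contiguous subsequence of steps starting and ending at the same point $(p,q)$ and visiting only points $(x,y)$ with $x\ge p$, $y\ge q$. A walk is \emph{standard} if every QP-subloop (of positive length) begins with an $N$ step. A \emph{big-walk} is a standard eager walk staying in the half-plane $\{x+y\ge 0\}$ and ending at some point $(x,-x)$. A \emph{left-walk} is a big-walk ending at a point $(x,-x)$ with $x\le 0$; a \emph{right-walk} is a big-walk ending at a point $(x,-x)$ with $x\ge 0$. *)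

From HB Require Import structures.
From mathcomp Require Import all_boot all_order all_algebra.
Set Implicit Arguments. Unset Strict Implicit. Unset Printing Implicit Defensive.
Import Order.TTheory GRing.Theory Num.Theory.

Inductive step := N | E | S | W.

Definition step_code (s : step) : bool * bool :=
  match s with N => (false, false) | E => (false, true)
             | S => (true, false) | W => (true, true) end.
Definition step_decode (c : bool * bool) : step :=
  match c with (false, false) => N | (false, true) => E
             | (true, false) => S | (true, true) => W end.
Lemma step_codeK : cancel step_code step_decode. Proof. by case. Qed.
HB.instance Definition _ := Finite.copy step (can_type step_codeK).

Local Open Scope ring_scope.

Definition step_vec (s : step) : int * int :=
  match s with N => (0, 1) | E => (1, 0) | S => (0, -1) | W => (-1, 0) end.

Definition endpoint (w : seq step) : int * int :=
  foldl (fun p s => (p.1 + (step_vec s).1, p.2 + (step_vec s).2)) (0, 0) w.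

Definition point (w : seq step) (k : nat) : int * int := endpoint (take k w).

Local Close Scope ring_scope.

Definition eager (w : seq step) : bool :=
  all (fun k => ~~ ((nth N w k == E) && (nth N w k.+1 == S))
              && ~~ ((nth N w k == N) && (nth N w k.+1 == W)))
      (iota 0 (size w).-1).

(* the steps i+1..j (0-indexed steps i..j-1) form a QP-subloop, i < j *)
Definition qp_subloop (w : seq step) (i j : nat) : bool :=
  [&& i < j, j <= size w, point w i == point w j &
     all (fun k => ((point w i).1 <= (point w k).1)%R
                   && ((point w i).2 <= (point w k).2)%R) (iota i (j - i).+1)].

Definition standard (w : seq step) : bool :=
  all (fun i => all (fun j => qp_subloop w i j ==> (nth N w i == N))
                    (iota 0 (size w).+1))
      (iota 0 (size w).+1).

Definition in_half_plane (w : seq step) : bool :=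
  all (fun k => (0 <= (point w k).1 + (point w k).2)%R) (iota 0 (size w).+1).

Definition big_walk (w : seq step) : bool :=
  [&& standard w, eager w, in_half_plane w &
      ((endpoint w).1 + (endpoint w).2 == 0)%R].

Definition left_walk (w : seq step) : bool :=
  big_walk w && ((endpoint w).1 <= 0)%R.

Definition right_walk (w : seq step) : bool :=
  big_walk w && (0 <= (endpoint w).1)%R.

From HB Require Import structures.
From mathcomp Require Import all_boot all_order all_algebra.
From mathcomp Require Import zify.
Set Implicit Arguments. Unset Strict Implicit. Unset Printing Implicit Defensive.
Import Order.TTheory GRing.Theory Num.Theory.

(* The bijection from right-walks to left-walks mirrors in the diagonal (N <-> E, S <-> W) exactly the steps
   lying in no QP-subloop.  Overlapping QP-subloops merge, so the points lying
   strictly inside no QP-subloop cut the walk into free steps, which are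
   mirrored, and maximal QP-subloops, which are only translated.  Hence at
   those points the image is the reflection of the walk, the image has the same
   QP-subloops (so the map is an involution preserving standardness), it keeps
   x + y at every point and reflects the endpoint, and it stays eager because a
   QP-subloop starts with N or E and ends with S or W. *)

Definition mirror_step (s : step) : step :=
  match s with N => E | E => N | S => W | W => S end.

Lemma mirror_stepK : involutive mirror_step. Proof. by case. Qed.

Definition swap_pt (p : int * int) : int * int := (p.2, p.1).

Lemma swap_ptK : involutive swap_pt. Proof. by case. Qed.

Lemma step_vec_mirror s : step_vec (mirror_step s) = swap_pt (step_vec s).
Proof. by case: s. Qed.

Definition le_pt (p q : int * int) := ((p.1 <= q.1)%R && (p.2 <= q.2)%R).

Lemma pair_eq (p q : int * int) : p.1 = q.1 -> p.2 = q.2 -> p = q.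
Proof. by case: p q => [a b] [c d] /= -> ->. Qed.

Lemma point0 w : point w 0 = (0%R, 0%R). Proof. by rewrite /point take0. Qed.

Lemma point_succ w k : k < size w -> point w k.+1 =
  ((point w k).1 + (step_vec (nth N w k)).1, (point w k).2 + (step_vec (nth N w k)).2)%R.
Proof. by move=> hk; rewrite /point (take_nth N hk) /endpoint foldl_rcons. Qed.

Lemma point_size w k : size w <= k -> point w k = endpoint w.
Proof. by move=> hk; rewrite /point take_oversize. Qed.

Lemma qp_subloopP w i j : reflect [/\ i < j, j <= size w, point w i = point w j &
   forall k, i <= k <= j -> le_pt (point w i) (point w k)] (qp_subloop w i j).
Proof.
rewrite /qp_subloop; apply: (iffP and4P) => [[hij hj /eqP eij /allP hle]|[hij hj eij hle]].
  by split=> // k hk; apply: hle; rewrite mem_iota; lia.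
split=> //; first exact/eqP.
by apply/allP => k; rewrite mem_iota => hk; apply: hle; lia.
Qed.

Section Subloops.

Variable w : seq step.

Definition has_subloop (P : nat -> nat -> bool) :=
  [exists i : 'I_(size w).+1, exists j : 'I_(size w).+1, qp_subloop w i j && P i j].

Lemma has_subloopP (P : nat -> nat -> bool) :
  reflect (exists i j, qp_subloop w i j /\ P i j) (has_subloop P).
Proof.
apply: (iffP existsP) => [[i /existsP[j /andP[hl hP]]]|[i [j [hl hP]]]].
  by exists i, j.
case/qp_subloopP: (hl) => hij hj _ _.
exists (inord i); apply/existsP; exists (inord j).
by rewrite !inordK ?hl ?hP //; lia.
Qed.

Definition looped k := has_subloop (fun i j => i <= k < j).
Definition inner a := has_subloop (fun i j => i < a < j).

Lemma subloop_looped i j k : qp_subloop w i j -> i <= k < j -> looped k.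
Proof. by move=> hl hk; apply/has_subloopP; exists i, j. Qed.

Lemma inner_looped k : inner k -> looped k.
Proof. by case/has_subloopP=> i [j [hl hk]]; apply: (subloop_looped hl); lia. Qed.

Lemma subloop_merge a b c d : a <= c <= b -> b <= d ->
  qp_subloop w a b -> qp_subloop w c d -> qp_subloop w a d.
Proof.
move=> hc hbd /qp_subloopP[hab hb eab lab] /qp_subloopP[hcd hd ecd lcd].
have := lab c hc; have := lcd b ltac:(lia).
rewrite /le_pt -eab => /andP[u1 u2] /andP[v1 v2].
have eac : point w a = point w c by apply: pair_eq; lia.
apply/qp_subloopP; split; [lia | done | by rewrite eac |].
move=> k hk; case: (leqP k b) => hkb; first by apply: lab; lia.
by rewrite eac; apply: lcd; lia.
Qed.

Lemma subloop_restrict i j p q : qp_subloop w i j -> i <= p < q -> q <= j ->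
  point w p = point w i -> point w q = point w i -> qp_subloop w p q.
Proof.
move=> /qp_subloopP[hij hj eij le] hpq hqj ep eq.
apply/qp_subloopP; split; [lia | lia | by rewrite ep eq |].
by move=> k hk; rewrite ep; apply: le; lia.
Qed.

Lemma left_anchor m : m <= size w -> exists a, [/\ a <= m, ~~ inner a &
  a = m \/ exists j, a < m < j /\ qp_subloop w a j].
Proof.
elim/ltn_ind: m => m IH hm.
have [/has_subloopP[i [j [hij him]]]|hout] := boolP (inner m); last first.
  by exists m; split=> //; left.
case/qp_subloopP: (hij) => _ hj _ _.
have [a [hai hout ha]] := IH i ltac:(lia) ltac:(lia).
exists a; split=> //; first lia; right.
case: ha => [eai|[j' [haj' haj]]]; first by exists j; rewrite eai; split=> //; lia.
case: (leqP j' j) => hj'.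
  by exists j; split; [lia | apply: subloop_merge haj hij; lia].
by exists j'; split=> //; lia.
Qed.

Lemma right_anchor m : m <= size w -> exists b, [/\ m <= b, ~~ inner b &
  b = m \/ exists i, i < m < b /\ qp_subloop w i b].
Proof.
move=> hm; have [d hd] : exists d, size w - m <= d by exists (size w - m).
elim: d m hm hd => [|d IH] m hm hd;
  (have [/has_subloopP[i [j [hij him]]]|hout] := boolP (inner m); last first);
  try by exists m; split=> //; left.
  by case/qp_subloopP: hij => _ hj _ _; lia.
case/qp_subloopP: (hij) => _ hj _ _.
have [b [hjb hout hb]] := IH j hj ltac:(lia).
exists b; split=> //; first lia; right.
case: hb => [ejb|[i' [hi'b hi'l]]]; first by exists i; rewrite ejb; split=> //; lia.
case: (leqP i i') => hii'.
  by exists i; split; [lia | apply: subloop_merge hij hi'l; lia].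
by exists i'; split=> //; lia.
Qed.

Lemma outer_subloop_start i j : ~~ inner j -> qp_subloop w i j ->
  exists a, [/\ a <= i, ~~ inner a & qp_subloop w a j].
Proof.
move=> hj hij; case/qp_subloopP: (hij) => hlt hjs _ _.
have [a [hai hout [eai|[j' [haj' hl]]]]] := left_anchor (m:=i) ltac:(lia).
  by exists a; split=> //; rewrite eai.
exists a; split=> //; apply: subloop_merge (hl) hij; first lia.
case: (leqP j' j) => // hjj'.
move/negP: hj; case; apply/has_subloopP; exists a, j'; split=> //=; lia.
Qed.

Lemma subloop_first_step i j : qp_subloop w i j -> nth N w i \in [:: N; E].
Proof.
case/qp_subloopP=> hij hj _ le; have := le i.+1 ltac:(lia).
by rewrite /le_pt point_succ /=; [case: (nth N w i) => //= /andP[]; lia | lia].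
Qed.

Lemma subloop_last_step i j : qp_subloop w i j -> nth N w j.-1 \in [:: S; W].
Proof.
case/qp_subloopP=> hij hj eij le; have := le j.-1 ltac:(lia).
have hj0 : 0 < j by lia.
rewrite /le_pt eij -[in point w j](prednK hj0) point_succ /=; last lia.
by case: (nth N w j.-1) => //= /andP[]; lia.
Qed.

Lemma looped_exit_step k : looped k -> ~~ looped k.+1 -> nth N w k \in [:: S; W].
Proof.
move=> /has_subloopP[i [j [hl /andP[hik hkj]]]] hout.
have -> : k = j.-1.
  case: (ltnP k.+1 j) => hj; last lia.
  by move/negP: hout; case; apply: (subloop_looped hl); lia.
exact: subloop_last_step hl.
Qed.

Lemma looped_entry_step k : ~~ looped k -> looped k.+1 -> nth N w k.+1 \in [:: N; E].
Proof.
move=> hout /has_subloopP[i [j [hl /andP[hik hkj]]]].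
have -> : k.+1 = i.
  case: (ltnP i k.+1) => hi; last lia.
  by move/negP: hout; case; apply: (subloop_looped hl); lia.
exact: subloop_first_step hl.
Qed.

End Subloops.

Definition mirror_walk w :=
  mkseq (fun k => if looped w k then nth N w k else mirror_step (nth N w k)) (size w).

Lemma size_mirror w : size (mirror_walk w) = size w.
Proof. by rewrite size_mkseq. Qed.

Lemma nth_mirror w k : k < size w -> nth N (mirror_walk w) k =
  if looped w k then nth N w k else mirror_step (nth N w k).
Proof. by move=> hk; rewrite nth_mkseq. Qed.

Section Mirror.

Variable w : seq step.
Local Notation w' := (mirror_walk w).

Lemma mirror_point_shift i m : i <= m <= size w ->
  (forall s, i <= s < m -> looped w s) ->
  ((point w' m).1 - (point w' i).1 = (point w m).1 - (point w i).1)%R /\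
  ((point w' m).2 - (point w' i).2 = (point w m).2 - (point w i).2)%R.
Proof.
elim: m => [|m IH] hm hs.
  by case/andP: hm; rewrite leqn0 => /eqP -> _; rewrite !subrr.
have [->|hne] := eqVneq i m.+1; first by rewrite !subrr.
have [h1 h2] := IH ltac:(lia) (fun s hs' => hs s ltac:(lia)).
have hm' : m < size w by lia.
rewrite (point_succ hm') point_succ ?size_mirror // nth_mirror // (hs m) /=; lia.
Qed.

Lemma mirror_point_subloop a b i m : qp_subloop w a b -> a <= i <= m -> m <= b ->
  ((point w' m).1 - (point w' i).1 = (point w m).1 - (point w i).1)%R /\
  ((point w' m).2 - (point w' i).2 = (point w m).2 - (point w i).2)%R.
Proof.
move=> hl him hmb; case/qp_subloopP: (hl) => _ hb _ _.
by apply: mirror_point_shift => [|s hs]; [lia | apply: (subloop_looped hl); lia].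
Qed.

Lemma mirror_point_outer a : a <= size w -> ~~ inner w a ->
  point w' a = swap_pt (point w a).
Proof.
elim/ltn_ind: a => -[|k] IH ha hout; first by rewrite !point0.
have hk : k < size w by lia.
have [/has_subloopP[i [j [hl hij]]]|hk_out] := boolP (looped w k).
  have hj : j = k.+1.
    case/qp_subloopP: (hl) => _ hj _ _.
    case: (ltnP k.+1 j) => hkj; last lia.
    by move/negP: hout; case; apply/has_subloopP; exists i, j; split=> //=; lia.
  subst j; have [a [hai haout hal]] := outer_subloop_start hout hl.
  have /(congr1 fst) /= e1 := IH a ltac:(lia) ltac:(lia) haout.
  have /(congr1 snd) /= e2 := IH a ltac:(lia) ltac:(lia) haout.
  have [t1 t2] := mirror_point_subloop (i:=a) (m:=k.+1) hal ltac:(lia) (leqnn _).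
  case/qp_subloopP: hal => _ _ ea _.
  by rewrite -ea in t1 t2 *; apply: pair_eq => /=; lia.
have hk_in : ~~ inner w k by exact: contra (@inner_looped w k) hk_out.
have /(congr1 fst) /= e1 := IH k (ltnSn k) (ltnW ha) hk_in.
have /(congr1 snd) /= e2 := IH k (ltnSn k) (ltnW ha) hk_in.
rewrite (point_succ hk) point_succ ?size_mirror // nth_mirror // (negbTE hk_out).
by rewrite step_vec_mirror; apply: pair_eq => /=; lia.
Qed.

Lemma mirror_point_sum m : m <= size w ->
  ((point w' m).1 + (point w' m).2 = (point w m).1 + (point w m).2)%R.
Proof.
elim: m => [|m IH] hm; first by rewrite !point0.
rewrite (point_succ (w:=w)) ?point_succ ?size_mirror ?nth_mirror /=; try lia.
have := IH (ltnW hm); case: (looped w m); rewrite ?step_vec_mirror /=; lia.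
Qed.

Lemma subloop_mirror i j : qp_subloop w i j -> qp_subloop w' i j.
Proof.
move=> hl; case/qp_subloopP: (hl) => hij hj eij le.
apply/qp_subloopP; split; [done | by rewrite size_mirror | |].
  have [t1 t2] := mirror_point_subloop (i:=i) (m:=j) hl ltac:(lia) (leqnn _).
  by rewrite -eij in t1 t2; apply: pair_eq; lia.
move=> k hk; have [t1 t2] := mirror_point_subloop (i:=i) (m:=k) hl ltac:(lia) ltac:(lia).
by have /andP[u1 u2] := le k hk; apply/andP; lia.
Qed.

Lemma subloop_mirror_outer p q : ~~ inner w p -> ~~ inner w q ->
  qp_subloop w' p q -> qp_subloop w p q.
Proof.
move=> hp hq /qp_subloopP[hpq hqs epq le]; rewrite size_mirror in hqs.
have ep := mirror_point_outer (ltnW (leq_trans hpq hqs)) hp.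
have eq := mirror_point_outer hqs hq.
apply/qp_subloopP; split=> //.
  by rewrite -[point w p]swap_ptK -[point w q]swap_ptK -ep -eq epq.
move=> m hm; have [a [ham ha hanc]] := left_anchor (w:=w) (m:=m) ltac:(lia).
have hpa : p <= a.
  case: hanc => [->|[j' [haj hl]]]; first by case/andP: hm.
  case: (leqP p a) => // hap; move/negP: hp; case.
  by apply/has_subloopP; exists a, j'; split=> //=; lia.
have hwa : le_pt (point w a) (point w m).
  case: hanc => [->|[j' [haj /qp_subloopP[_ _ _ le']]]]; first by rewrite /le_pt !lexx.
  by apply: le'; lia.
have := le a ltac:(lia); rewrite ep mirror_point_outer //; last lia.
by move: hwa; rewrite /le_pt /= => /andP[u1 u2] /andP[v1 v2]; apply/andP; lia.
Qed.

Lemma mirror_subloop_left_outer i j k : qp_subloop w' i j -> i <= k < j ->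
  ~~ looped w k -> exists p, [/\ i <= p <= k, ~~ inner w p & point w' p = point w' i].
Proof.
move=> hl hk hkout; case/qp_subloopP: (hl); rewrite size_mirror => hij hj _ le.
have [b [hib hb [eb|[a [hab hab_l]]]]] := right_anchor (w:=w) (m:=i) ltac:(lia).
  by subst b; exists i; split=> //; lia.
have hbk : b <= k.
  case: (leqP b k) => // hkb; move/negP: hkout; case.
  by apply: (subloop_looped hab_l); lia.
have [t1 t2] := mirror_point_subloop (i:=i) (m:=b) hab_l ltac:(lia) (leqnn _).
case/qp_subloopP: hab_l => _ _ eab le'.
have /andP[u1 u2] := le b ltac:(lia).
have /andP[v1 v2] := le' i ltac:(lia).
by exists b; split=> //; [lia | rewrite eab in v1 v2; apply: pair_eq; lia].
Qed.

Lemma mirror_subloop_right_outer i j k : qp_subloop w' i j -> i <= k < j ->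
  ~~ looped w k -> exists q, [/\ k < q <= j, ~~ inner w q & point w' q = point w' j].
Proof.
move=> hl hk hkout; case/qp_subloopP: (hl); rewrite size_mirror => hij hj eij le.
have [c [hcj hc [ec|[d [hcd hcd_l]]]]] := left_anchor (m:=j) hj.
  by subst c; exists j; split=> //; lia.
have hkc : k < c.
  case: (ltnP k c) => // hck; move/negP: hkout; case.
  by apply: (subloop_looped hcd_l); lia.
have [t1 t2] := mirror_point_subloop (i:=c) (m:=j) hcd_l ltac:(lia) ltac:(lia).
case/qp_subloopP: hcd_l => _ _ _ le'.
have /andP[u1 u2] := le c ltac:(lia).
have /andP[v1 v2] := le' j ltac:(lia).
by exists c; split=> //; [lia | rewrite eij in u1 u2; apply: pair_eq; lia].
Qed.

Lemma subloop_of_mirror i j : qp_subloop w' i j -> qp_subloop w i j.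
Proof.
move=> hl; case/qp_subloopP: (hl); rewrite size_mirror => hij hj eij le.
have [hall|/allPn[k]] := boolP (all (looped w) (iota i (j - i))); last first.
  rewrite mem_iota => hk hkout.
  (* the outer points around the free step k bound a QP-subloop of w containing it *)
  have [p [hp hpout ep]] := mirror_subloop_left_outer (k:=k) hl ltac:(lia) hkout.
  have [q [hq hqout eq]] := mirror_subloop_right_outer (k:=k) hl ltac:(lia) hkout.
  have hpq : qp_subloop w' p q.
    by apply: subloop_restrict hl _ _ ep _; rewrite ?eq //; lia.
  move/negP: hkout; case; apply: (subloop_looped (subloop_mirror_outer hpout hqout hpq)).
  lia.
have hs m : m <= j -> forall s, i <= s < m -> looped w s.
  by move=> hm s hs; apply: (allP hall); rewrite mem_iota; lia.
apply/qp_subloopP; split=> //.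
  have [t1 t2] := mirror_point_shift (i:=i) (m:=j) ltac:(lia) (hs j (leqnn _)).
  by rewrite -eij in t1 t2; apply: pair_eq; lia.
move=> m hm; have [t1 t2] := mirror_point_shift (i:=i) (m:=m) ltac:(lia) (hs m ltac:(lia)).
by have /andP[u1 u2] := le m hm; apply/andP; lia.
Qed.

End Mirror.

Lemma mirror_subloopE w i j : qp_subloop (mirror_walk w) i j = qp_subloop w i j.
Proof. by apply/idP/idP; [apply: subloop_of_mirror | apply: subloop_mirror]. Qed.

Lemma looped_mirror w k : looped (mirror_walk w) k = looped w k.
Proof.
by apply/has_subloopP/has_subloopP => -[i [j [hl hk]]]; exists i, j;
  rewrite ?mirror_subloopE in hl *.
Qed.

Lemma mirror_walkK : involutive mirror_walk.
Proof.
move=> w; apply: (@eq_from_nth _ N); rewrite !size_mirror // => k hk.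
rewrite nth_mirror ?size_mirror // looped_mirror nth_mirror //.
by case: (looped w k); rewrite ?mirror_stepK.
Qed.

Lemma endpoint_mirror w : endpoint (mirror_walk w) = swap_pt (endpoint w).
Proof.
rewrite -(point_size (w:=w) (leqnn _)) -(point_size (w:=mirror_walk w) (k:=size w)) ?size_mirror //.
apply: mirror_point_outer => //; apply/has_subloopP => -[i [j [/qp_subloopP[_ hj _ _]]]] /=.
lia.
Qed.

Lemma standard_mirror w : standard w -> standard (mirror_walk w).
Proof.
move=> hst; apply/allP => i _; apply/allP => j _; apply/implyP.
rewrite mirror_subloopE => hl; case/qp_subloopP: (hl) => hij hj _ _.
have := allP hst i; rewrite mem_iota => /(_ ltac:(lia)) /allP /(_ j).
rewrite mem_iota => /(_ ltac:(lia)) /implyP /(_ hl).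
by rewrite nth_mirror ?(subloop_looped hl) //; lia.
Qed.

Lemma eager_mirror w : eager w -> eager (mirror_walk w).
Proof.
move=> hea; apply/allP => k; rewrite size_mirror mem_iota => hk.
have := allP hea k; rewrite mem_iota => /(_ hk).
rewrite !nth_mirror; try lia.
case h1: (looped w k); case h2: (looped w k.+1) => //.
- have := looped_exit_step h1 (negbT h2).
  by case: (nth N w k); case: (nth N w k.+1).
- have := looped_entry_step (negbT h1) h2.
  by case: (nth N w k); case: (nth N w k.+1).
- by case: (nth N w k); case: (nth N w k.+1).
Qed.

Lemma in_half_plane_mirror w : in_half_plane w -> in_half_plane (mirror_walk w).
Proof.
move=> hhp; apply/allP => m; rewrite size_mirror mem_iota => hm.
by rewrite mirror_point_sum; [apply: (allP hhp); rewrite mem_iota | lia].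
Qed.

Lemma big_walk_mirror w : big_walk w -> big_walk (mirror_walk w).
Proof.
case/and4P=> hst hea hhp hend; apply/and4P; split.
- exact: standard_mirror.
- exact: eager_mirror.
- exact: in_half_plane_mirror.
- by rewrite endpoint_mirror addrC.
Qed.

Lemma right_walk_mirror w : left_walk w -> right_walk (mirror_walk w).
Proof.
case/andP=> hb hx; rewrite /right_walk big_walk_mirror // endpoint_mirror /=.
by case/and4P: hb => _ _ _ hend; lia.
Qed.

Lemma left_walk_mirror w : right_walk w -> left_walk (mirror_walk w).
Proof.
case/andP=> hb hx; rewrite /left_walk big_walk_mirror // endpoint_mirror /=.
by case/and4P: hb => _ _ _ hend; lia.
Qed.

Lemma size_mirror_tuple n (t : n.-tuple step) : size (mirror_walk t) == n.
Proof. by rewrite size_mirror size_tuple. Qed.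

Definition mirror_tuple n (t : n.-tuple step) : n.-tuple step := Tuple (size_mirror_tuple t).

Lemma mirror_tupleK n : involutive (@mirror_tuple n).
Proof. by move=> t; apply: val_inj; rewrite /= mirror_walkK. Qed.

Theorem lemma2p1 (n : nat) :
  #|[set t : (2 * n).-tuple step | left_walk t]| =
  #|[set t : (2 * n).-tuple step | right_walk t]|.
Proof.
have -> : [set t : (2 * n).-tuple step | left_walk t] =
          @mirror_tuple _ @: [set t : (2 * n).-tuple step | right_walk t].
  apply/setP => t; rewrite inE; apply/idP/imsetP => [hl|[u]].
    by exists (mirror_tuple t); rewrite ?mirror_tupleK // inE right_walk_mirror.
  by rewrite inE => hu ->; apply: left_walk_mirror.
by rewrite card_imset //; apply: inv_inj; apply: mirror_tupleK.
Qed.
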